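(* Let $d\in\mathbb N$, $l\in\mathbb Z_+^d$, $\rho,\sigma\in(0,\infty)^d$. There is a constant $c=c(d,l,\rho,\sigma)>0$ such that for all $x^0,y^0,X^0\in\mathbb R^d$ and $\delta,\eta,\Delta\in(0,\infty)^d$ with $$x^0+\sigma\delta I^d\subset y^0+\eta I^d\subset(y^0+\rho\delta I^d)\cap(X^0+\Delta I^d),$$ every $J\subset\{1,\dots,d\}$, every family of functions $\chi^j$ ($j\in J$) continuous on $\mathbb R$ with compact support and $\chi^j=1$ on $X^0_j+\Delta_jI$, and every $f\in C_0(\mathbb R^d)$, $$\Bigl\|\Bigl(\prod_{j\in J}V_j(E-M_{\chi^j}\mathcal P^{1,l_j}_{\sigma_j\delta_j,x^0_j})\Bigr)f\Bigr\|_{L_\infty(G)}\le c\|f\|_{L_\infty(G)},\qquad G=y^0+\eta I^d.$$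
   Context: $I=(0,1)$, $I^d=(0,1)^d$, products componentwise. For each $k\in\mathbb Z_+$ fixed distinct points $\xi^{k,0},\dots,\xi^{k,k}\in(0,1)$ are chosen; for $a\in\mathbb R$, $\delta>0$ and $g$ continuous on $(a,a+\delta)$, $\mathcal P^{1,k}_{\delta,a}g$ is the polynomial of degree $\le k$ interpolating $g$ at $a+\delta\xi^{k,\mu}$, $\mu=0,\dots,k$. $E$ is the identity and $E-M_\chi\mathcal P^{1,k}_{\delta,a}$ is the bounded operator on $C_0(\mathbb R)$, $g\mapsto g-\chi\cdot\mathcal P^{1,k}_{\delta,a}(g|_{(a,a+\delta)})$. $C_0(\mathbb R^d)$: continuous functions vanishing at infinity. For a bounded operator $T$ on $C_0(\mathbb R)$, $V_j(T)$ is the unique bounded operator on $C_0(\mathbb R^d)$ with $(V_j(T)f)(x)=(T(f(x_1,\dots,x_{j-1},\cdot,x_{j+1},\dots,x_d)))(x_j)$; these commute for different $j$. *)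

From HB Require Import structures.
From mathcomp Require Import all_boot all_order all_algebra.
From mathcomp Require Import all_classical all_reals topology normedtype.
Set Implicit Arguments. Unset Strict Implicit. Unset Printing Implicit Defensive.
Import Order.TTheory GRing.Theory Num.Theory.
Import numFieldNormedType.Exports.
Local Open Scope classical_set_scope.
Local Open Scope ring_scope.

(* Points of R^d are row vectors 'rV[R]_d (sup norm); coordinate i of x is x ord0 i. *)

(* The open box a + h I^d = prod_i (a_i, a_i + h_i), for h with positive entries. *)
Definition box (R : realType) (d : nat) (a h : 'rV[R]_d) : set 'rV[R]_d :=
  [set y | forall i, a ord0 i < y ord0 i < a ord0 i + h ord0 i].

Definition upd (R : realType) (d : nat) (x : 'rV[R]_d) (j : 'I_d) (t : R) : 'rV[R]_d :=
  \row_i (if i == j then t else x ord0 i).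

(* Lagrange interpolation: P^{1,k}_{delta,a} g, the polynomial of degree <= k
   interpolating g at the nodes a + delta * xi k mu, mu = 0..k, evaluated at t. *)
Definition interp (R : realType) (xi : nat -> nat -> R) (k : nat) (delta a : R)
  (g : R -> R) (t : R) : R :=
  \sum_(mu < k.+1)
     g (a + delta * xi k mu) *
     \prod_(nu < k.+1 | nu != mu)
        ((t - (a + delta * xi k nu)) / (delta * xi k mu - delta * xi k nu)).

Definition EmMP (R : realType) (xi : nat -> nat -> R) (k : nat) (delta a : R)
  (chi : R -> R) (g : R -> R) (t : R) : R :=
  g t - chi t * interp xi k delta a g t.

Definition Vj (R : realType) (d : nat) (j : 'I_d) (T : (R -> R) -> R -> R)
  (f : 'rV[R]_d -> R) : 'rV[R]_d -> R :=
  fun x => T (fun t => f (upd x j t)) (x ord0 j).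

(* prod_{j in J} Op j, composed along the enumeration of J
   (the factors commute, so the order is immaterial). *)
Definition prodV (R : realType) (d : nat) (J : {set 'I_d})
  (Op : 'I_d -> ('rV[R]_d -> R) -> 'rV[R]_d -> R)
  (f : 'rV[R]_d -> R) : 'rV[R]_d -> R :=
  foldr (fun j g => Op j g) f (enum J).

Definition C0 (R : realType) (d : nat) (f : 'rV[R]_d -> R) : Prop :=
  continuous f /\
  forall e : R, 0 < e -> exists r : R, forall x : 'rV[R]_d,
      r < `|x| -> `|f x| < e.

Definition Cc (R : realType) (chi : R -> R) : Prop :=
  continuous chi /\ compact (closure [set t | chi t != 0]).

From HB Require Import structures.
From mathcomp Require Import all_boot all_order all_algebra.
From mathcomp Require Import all_classical all_reals topology normedtype.
From mathcomp Require Import ring lra.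
Set Implicit Arguments. Unset Strict Implicit. Unset Printing Implicit Defensive.
Import Order.TTheory GRing.Theory Num.Theory.
Import numFieldNormedType.Exports.
Local Open Scope classical_set_scope.
Local Open Scope ring_scope.

(* Each factor is bounded on G in one variable at a time.  On the j-th section
   of G the cutoff chi^j equals 1, so the factor is g - P g; the interpolation
   nodes lie in G (as x0 + sigma delta I^d is inside G) and the section of G has
   length at most rho_j delta_j, so each Lagrange basis polynomial is bounded by
   a product of ratios (rho_j / sigma_j) / |xi mu - xi nu|, independent of the
   boxes.  Bounds for the factors multiply along the composition. *)

Lemma dist_in_interval (R : realDomainType) (a w s t : R) :
  a < s < a + w -> a < t < a + w -> `|s - t| <= w.
Proof.
by move=> /andP[? ?] /andP[? ?]; rewrite ler_norml; apply/andP; split; lra.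
Qed.

Section Boxes.

Variables (R : realType) (d : nat).

Lemma box_sub_coord (a h b k : 'rV[R]_d) :
  (forall i, 0 < h ord0 i) -> box a h `<=` box b k ->
  forall j t, a ord0 j < t < a ord0 j + h ord0 j ->
              b ord0 j < t < b ord0 j + k ord0 j.
Proof.
move=> h_gt0 sub_ab j t ht.
pose z : 'rV[R]_d := \row_i (if i == j then t else a ord0 i + h ord0 i / 2).
have z_in : box a h z.
  move=> i; rewrite mxE; case: eqP => [->|_] //.
  by have := h_gt0 i; lra.
by have := sub_ab z z_in j; rewrite mxE eqxx.
Qed.

Lemma box_sub_node (a h b k : 'rV[R]_d) :
  (forall i, 0 < h ord0 i) -> box a h `<=` box b k ->
  forall j s, 0 < s < 1 ->
  b ord0 j < a ord0 j + h ord0 j * s < b ord0 j + k ord0 j.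
Proof.
move=> h_gt0 sub_ab j s /andP[s_gt0 s_lt1]; apply: (box_sub_coord h_gt0 sub_ab).
by rewrite ltrDl mulr_gt0 //= ltrD2l gtr_pMr.
Qed.

Lemma box_sub_dist (a h k : 'rV[R]_d) :
  (forall i, 0 < h ord0 i) -> box a h `<=` box a k ->
  forall j s t, a ord0 j < s < a ord0 j + h ord0 j ->
  a ord0 j < t < a ord0 j + h ord0 j -> `|s - t| <= k ord0 j.
Proof.
move=> h_gt0 sub_ah j s t /(box_sub_coord h_gt0 sub_ah) s_in.
by move=> /(box_sub_coord h_gt0 sub_ah); apply: dist_in_interval.
Qed.

Lemma box_upd (b k y : 'rV[R]_d) j t :
  box b k y -> b ord0 j < t < b ord0 j + k ord0 j -> box b k (upd y j t).
Proof. by move=> hy ht i; rewrite mxE; case: eqP => [->|_] //; apply: hy. Qed.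

Lemma upd_id (y : 'rV[R]_d) j : upd y j (y ord0 j) = y.
Proof. by apply/rowP => i; rewrite mxE; case: eqP => [->|]. Qed.

End Boxes.

Section Interpolation.

Variables (R : realType) (xi : nat -> nat -> R) (k : nat).
Hypothesis xi_inj : injective (fun mu : 'I_k.+1 => xi k mu).

Definition interp_const (r : R) : R :=
  \sum_(mu < k.+1) \prod_(nu < k.+1 | nu != mu) (r / `|xi k mu - xi k nu|).

Lemma interp_const_ge0 r : 0 <= r -> 0 <= interp_const r.
Proof.
move=> r_ge0; apply: sumr_ge0 => mu _; apply: prodr_ge0 => nu _.
by rewrite divr_ge0.
Qed.

Variables (delta a r : R).
Hypothesis delta_gt0 : 0 < delta.

Lemma interp_norm_le (g : R -> R) (t M : R) :
  (forall mu : 'I_k.+1, `|g (a + delta * xi k mu)| <= M) ->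
  (forall nu : 'I_k.+1, `|t - (a + delta * xi k nu)| <= r * delta) ->
  `|interp xi k delta a g t| <= interp_const r * M.
Proof.
move=> g_le dist_le; rewrite /interp /interp_const mulr_suml.
apply: le_trans (ler_norm_sum _ _ _) _; apply: ler_sum => mu _.
rewrite normrM normr_prod mulrC; apply: ler_pM => //; first exact: prodr_ge0.
apply: ler_prod => nu nu_mu; rewrite normr_ge0 /=.
have xi_gap : 0 < `|xi k mu - xi k nu|.
  by rewrite normr_gt0 subr_eq0; apply: contra nu_mu => /eqP/xi_inj ->.
rewrite -mulrBr normf_div normrM (gtr0_norm delta_gt0).
have -> : r / `|xi k mu - xi k nu| = r * delta / (delta * `|xi k mu - xi k nu|).
  by field; rewrite ?gt_eqF.
by apply: ler_wpM2r; [rewrite invr_ge0 mulr_ge0 // ltW | apply: dist_le].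
Qed.

Lemma EmMP_norm_le (chi g : R -> R) (t M : R) :
  chi t = 1 -> `|g t| <= M ->
  (forall mu : 'I_k.+1, `|g (a + delta * xi k mu)| <= M) ->
  (forall nu : 'I_k.+1, `|t - (a + delta * xi k nu)| <= r * delta) ->
  `|EmMP xi k delta a chi g t| <= (1 + interp_const r) * M.
Proof.
move=> chi1 gt_le g_le dist_le; rewrite /EmMP chi1 mul1r mulrDl mul1r.
by apply: le_trans (ler_normB _ _) _; apply: lerD => //; apply: interp_norm_le.
Qed.

Variables (d : nat) (b h : 'rV[R]_d) (j : 'I_d) (chi : R -> R).
Hypothesis chi1 : forall t, b ord0 j < t < b ord0 j + h ord0 j -> chi t = 1.
Hypothesis nodes_in : forall mu : 'I_k.+1,
  b ord0 j < a + delta * xi k mu < b ord0 j + h ord0 j.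
Hypothesis width_le : forall s t,
  b ord0 j < s < b ord0 j + h ord0 j -> b ord0 j < t < b ord0 j + h ord0 j ->
  `|s - t| <= r * delta.

Lemma Vj_EmMP_norm_le (g : 'rV[R]_d -> R) (M : R) :
  (forall y, box b h y -> `|g y| <= M) ->
  forall y, box b h y ->
  `|Vj j (EmMP xi k delta a chi) g y| <= (1 + interp_const r) * M.
Proof.
move=> g_le y y_in; rewrite /Vj.
apply: EmMP_norm_le; first exact/chi1/y_in.
- by rewrite upd_id; apply: g_le.
- by move=> mu; apply/g_le/box_upd.
- by move=> nu; apply: width_le.
Qed.

End Interpolation.

Lemma prodV_norm_le (R : realType) (d : nat) (J : {set 'I_d})
    (Op : 'I_d -> ('rV[R]_d -> R) -> 'rV[R]_d -> R) (G : set 'rV[R]_d)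
    (C : 'I_d -> R) :
  (forall j, j \in J -> 0 <= C j) ->
  (forall j, j \in J -> forall g M, (forall y, G y -> `|g y| <= M) ->
     forall y, G y -> `|Op j g y| <= C j * M) ->
  forall f M, (forall y, G y -> `|f y| <= M) ->
  forall y, G y -> `|prodV J Op f y| <= (\prod_(j in J) C j) * M.
Proof.
move=> C_ge0 Op_le f M f_le; rewrite -big_enum /prodV.
have : {subset enum J <= J} by move=> j; rewrite mem_enum.
elim: (enum J) => [|j s IH] sJ y y_in /=.
  by rewrite big_nil mul1r; apply: f_le.
rewrite big_cons -mulrA; apply: Op_le y_in; first by apply: sJ; rewrite inE eqxx.
by apply: IH => i i_s; apply: sJ; rewrite inE i_s orbT.
Qed.

Lemma prodr_ge1 (R : realDomainType) (I : Type) (s : seq I) (P : pred I)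
    (F : I -> R) :
  (forall i, P i -> 1 <= F i) -> 1 <= \prod_(i <- s | P i) F i.
Proof.
by move=> F_ge1; apply: (big_ind (fun x => 1 <= x)) => // x y; apply: mulr_ege1.
Qed.

Lemma prod_in_le_prod (R : realDomainType) (I : finType) (A : {pred I})
    (C : I -> R) :
  (forall i, 1 <= C i) -> \prod_(i in A) C i <= \prod_i C i.
Proof.
move=> C_ge1; have C_ge0 i : 0 <= C i by apply: le_trans (C_ge1 i).
rewrite [X in _ <= X](bigID [in A]) /= ler_peMr ?prodr_ge0 //.
by apply: prodr_ge1 => i _.
Qed.

Theorem lemma2p1p6 (R : realType) (xi : nat -> nat -> R)
  (hxi : forall k mu : nat, (mu <= k)%N -> 0 < xi k mu < 1)
  (hxi_inj : forall k mu nu : nat, (mu <= k)%N -> (nu <= k)%N ->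
                xi k mu = xi k nu -> mu = nu)
  (d : nat) (l : 'I_d -> nat) (rho sigma : 'rV[R]_d)
  (hrho : forall i, 0 < rho ord0 i) (hsigma : forall i, 0 < sigma ord0 i) :
  exists c : R, 0 < c /\
  forall (x0 y0 X0 delta eta Delta : 'rV[R]_d),
    (forall i, 0 < delta ord0 i) -> (forall i, 0 < eta ord0 i) ->
    (forall i, 0 < Delta ord0 i) ->
    box x0 (\row_i (sigma ord0 i * delta ord0 i)) `<=` box y0 eta ->
    box y0 eta `<=` box y0 (\row_i (rho ord0 i * delta ord0 i)) `&` box X0 Delta ->
  forall (J : {set 'I_d}) (chi : 'I_d -> R -> R),
    (forall j, j \in J -> Cc (chi j) /\
        forall t, X0 ord0 j < t < X0 ord0 j + Delta ord0 j -> chi j t = 1) ->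
  forall f : 'rV[R]_d -> R, C0 f ->
  forall M : R, (forall y, box y0 eta y -> `|f y| <= M) ->
  forall x, box y0 eta x ->
    `|prodV J (fun j => Vj j (EmMP xi (l j)
                 (sigma ord0 j * delta ord0 j) (x0 ord0 j) (chi j))) f x|
      <= c * M.
Proof.
pose C j := 1 + interp_const xi (l j) (rho ord0 j / sigma ord0 j).
have C_ge1 j : 1 <= C j by rewrite lerDl interp_const_ge0 ?divr_ge0 ?ltW.
exists (\prod_j C j); split.
  exact: lt_le_trans ltr01 (prodr_ge1 _ (fun j _ => C_ge1 j)).
move=> x0 y0 X0 delta eta Delta delta_gt0 eta_gt0 _ sub_x0 sub_y0.
move=> J chi hchi f _ M f_le x x_in.
have [sub_rho sub_X0] :
    box y0 eta `<=` box y0 (\row_i (rho ord0 i * delta ord0 i)) /\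
    box y0 eta `<=` box X0 Delta by split=> z /sub_y0[].
have sd_gt0 i : 0 < sigma ord0 i * delta ord0 i by rewrite mulr_gt0.
have sd_row_gt0 i : 0 < (\row_i (sigma ord0 i * delta ord0 i)) ord0 i.
  by rewrite mxE.
have M_ge0 : 0 <= M by apply: le_trans (f_le x x_in).
apply: le_trans (prodV_norm_le (C := C) _ _ f_le x_in) _ => [j _||].
- exact: le_trans (C_ge1 j).
- move=> j jJ; apply: Vj_EmMP_norm_le.
  + by move=> mu nu /hxi_inj /val_inj; apply; rewrite -ltnS.
  + by apply: sd_gt0.
  + move=> t /(box_sub_coord eta_gt0 sub_X0).
    exact: (proj2 (hchi j jJ)).
  + move=> mu; have := hxi (l j) mu (ltn_ord mu).
    by move/(box_sub_node sd_row_gt0 sub_x0 j); rewrite mxE.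
  + move=> s t s_in t_in; rewrite mulrA divfK ?gt_eqF //.
    by have := box_sub_dist eta_gt0 sub_rho s_in t_in; rewrite mxE.
- by apply: ler_wpM2r => //; apply: prod_in_le_prod.
Qed.
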